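(* Let $T=(V,E)$ be an $X$-tree and $f$ an interior edge of $T$. For each basis $B$ of $\mathbb{M}(T/f)$ and each cord $xy\in\binom{X}{2}$, let $\rho_{xy}\in\mathbb{R}^B$ be the unique map with $\lambda^{T/f}_{xy}=\sum_{b\in B}\rho_{xy}(b)\lambda^{T/f}_b$. Then the set $\mathbb{B}(T)$ of bases of $\mathbb{M}(T)$ equals $$\Big\{\{xy\}\cup B:\ xy\in\tbinom{X}{2},\ B\in\mathbb{B}(T/f),\ \sum_{b\in B}\rho_{xy}(b)\,\delta_{f|b}\neq\delta_{f|xy}\Big\},$$ where for a cord $zz'$, $\delta_{f|zz'}=1$ if $f\in E(z|z')$ and $\delta_{f|zz'}=0$ otherwise.
   Context: Let $X$ be a finite set with $|X|=n\ge 3$. An $X$-tree is a finite tree $T=(V,E)$ whose set of degree-1 vertices is exactly $X$ and which has no vertices of degree $2$; interior edges are edges not containing a leaf. A cord is a $2$-subset $\{x,y\}$ of $X$, written $xy$. $E(u|v)$ is the set of edges on the path from $u$ to $v$ in $T$. For each cord $xy$, $\lambda^T_{xy}:\mathbb{R}^E\to\mathbb{R}$, $\omega\mapsto\sum_{e\in E(x|y)}\omega(e)$. $\mathbb{M}(T)$ is the matroid on ground set $\binom{X}{2}$ represented over $\mathbb{R}$ by $xy\mapsto\lambda^T_{xy}$ (rank function $\mathrm{rk}^T(\mathcal{L})=\dim\mathrm{span}\{\lambda^T_{xy}:xy\in\mathcal{L}\}$); its rank is $|E|$ and $\mathbb{B}(T)$ denotes its set of bases. $T/f$ is the $X$-tree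 obtained by contracting the edge $f$, with edge set identified with $E-\{f\}$ and paths inherited from $T$. *)

From HB Require Import structures.
From mathcomp Require Import all_boot all_order all_algebra.
Set Implicit Arguments. Unset Strict Implicit. Unset Printing Implicit Defensive.
Import Order.TTheory GRing.Theory Num.Theory.

Section XTree.
Variable V : finType.
Variable adj : rel V.

Definition nbhd (u : V) : {set V} := [set v | adj u v].
Definition deg (u : V) : nat := #|nbhd u|.
(* X = the set of degree-1 vertices *)
Definition leaves : {set V} := [set u | deg u == 1%N].
Definition edges : {set {set V}} := [set e : {set V} | [exists u : V, [exists v : V, adj u v && (e == [set u; v])]]].

Definition is_Xtree : Prop :=
  [/\ symmetric adj /\ irreflexive adj,
      (forall u v, connect adj u v),
      (forall (u : V) (p q : seq V), path adj u p -> path adj u q ->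
          uniq (u :: p) -> uniq (u :: q) -> last u p = last u q -> p = q),
      (forall u, deg u != 2%N) & (3 <= #|leaves|)%N].

Definition interior_edge (f : {set V}) : Prop :=
  f \in edges /\ [disjoint f & leaves].

Definition pedges (u : V) (p : seq V) : {set {set V}} :=
  [set e | has (fun ab : V * V => e == [set ab.1; ab.2]) (zip (u :: p) p)].

Definition Epath (u v : V) : {set {set V}} :=
  [set e | [exists k : 'I_#|V|, [exists t : k.-tuple V,
     [&& path adj u t, uniq (u :: t), last u t == v & e \in pedges u t]]]].

Definition cord (c : {set V}) : bool := (c \subset leaves) && (#|c| == 2%N).

Definition Ecord (c : {set V}) : {set {set V}} :=
  [set e | [exists x : V, [exists y : V, (c == [set x; y]) && (e \in Epath x y)]]].

Definition delta (R : realFieldType) (f c : {set V}) : R := (f \in Ecord c)%:R.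

(* lambda^T_c, as its coefficient vector (indicator of E(x|y)) in R^E
   (coordinates indexed by {set V}; non-edge coordinates are always 0). *)
Definition lam (R : realFieldType) (c e : {set V}) : R := (e \in Ecord c)%:R.

(* lambda^{T/f}_c : edge set E - {f}, paths inherited from T *)
Definition lamC (R : realFieldType) (f c e : {set V}) : R :=
  ((e \in Ecord c) && (e != f))%:R.

Definition indep (R : realFieldType) (L : {set V} -> {set V} -> R)
    (B : {set {set V}}) : Prop :=
  forall a : {set V} -> R,
    (forall e, (\sum_(b in B) a b * L b e)%R = 0%R) -> forall b, b \in B -> a b = 0%R.

Definition is_basis (R : realFieldType) (L : {set V} -> {set V} -> R)
    (B : {set {set V}}) : Prop :=
  [/\ (forall b, b \in B -> cord b), indep L B &
      (forall c, cord c -> c \notin B -> ~ indep L (c |: B))].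

End XTree.

From HB Require Import structures.
From mathcomp Require Import all_boot all_order all_algebra.
From mathcomp Require Import zify ring.
From Stdlib Require Import Classical.
Set Implicit Arguments. Unset Strict Implicit. Unset Printing Implicit Defensive.
Import Order.TTheory GRing.Theory Num.Theory.

(* Write L for lambda^T and LC for lambda^(T/f); LC is L followed by the
   projection deleting the coordinate f.  The theorem splits into:

   - a purely linear-algebraic characterization (bases_via_contraction): if
     the unit vector of f lies in the span of every basis of L, then the bases
     of L are exactly the sets xy |: B where B is a basis of LC and the
     LC-representation rho of xy on B does not lift to L, i.e. leaves a
     nonzero residue L xy f - sum_b rho b * L b f on the coordinate f;

   - a tree-theoretic input (four_leaves): around an interior edge f = uv
     there are leaves a, b behind u and c, d behind v with
     lambda_ac + lambda_bd - lambda_ab - lambda_cd = 2 * (unit vector of f),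
     so the unit vector of f is indeed spanned by the cords. *)

Section PathEdges.
Variable V : finType.

Lemma pedges_nil (u : V) : pedges u [::] = set0.
Proof. by apply/setP=> e; rewrite !inE. Qed.

Lemma pedges_cons (u w : V) s : pedges u (w :: s) = [set u; w] |: pedges w s.
Proof. by apply/setP=> e; rewrite !inE. Qed.

Lemma pedges_cat (u : V) s1 s2 :
  pedges u (s1 ++ s2) = pedges u s1 :|: pedges (last u s1) s2.
Proof.
elim: s1 u => [|w s1 IH] u /=; first by rewrite pedges_nil set0U.
by rewrite !pedges_cons IH setUA.
Qed.

Lemma last_rev_belast (x : V) s : last (last x s) (rev (belast x s)) = x.
Proof.
case/lastP: s => [|s y] //=.
by rewrite last_rcons belast_rcons rev_cons last_rcons.
Qed.

Lemma pedges_rev (u : V) s : pedges (last u s) (rev (belast u s)) = pedges u s.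
Proof.
elim: s u => [|w s IH] u /=; first by rewrite pedges_nil.
rewrite rev_cons -cats1 pedges_cat IH last_rev_belast !pedges_cons pedges_nil.
by rewrite setU0 setUC; apply/setP=> e; rewrite !inE setUC.
Qed.

Lemma pedges_mem (adj : rel V) (u : V) s e : path adj u s -> e \in pedges u s ->
  exists a b, [/\ a \in u :: s, b \in u :: s, adj a b & e = [set a; b]].
Proof.
elim: s u => [|w s IH] u; first by rewrite pedges_nil inE.
rewrite pedges_cons /= => /andP [Huw Hp]; rewrite in_setU in_set1 => /orP [/eqP ->|He].
  by exists u, w; split => //; rewrite !inE ?eqxx ?orbT.
have [a [b [Ha Hb Hab ->]]] := IH w Hp He.
by exists a, b; split=> //; rewrite inE ?Ha ?Hb orbT.
Qed.

Lemma last_take_index (x y : V) s : y \in x :: s ->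
  last x (take (index y (x :: s)) s) = y.
Proof.
elim: s x => [|a s IH] x /=; first by rewrite inE => /eqP ->.
case: (eqVneq x y) => [-> //|nxy].
by rewrite inE eq_sym (negbTE nxy) /= => Hy; rewrite IH.
Qed.

End PathEdges.

Section Degrees.
Variables (V : finType) (adj : rel V).

Lemma other_nbr u v : adj u v -> u \notin leaves adj -> exists2 w, adj u w & w != v.
Proof.
move=> Huv Hl.
have : 1 < #|nbhd adj u|.
  have : 0 < #|nbhd adj u| by apply/card_gt0P; exists v; rewrite inE.
  by move: Hl; rewrite inE /deg; case: #|nbhd adj u| => [|[|n]].
case/card_gt1P=> w1 [w2 [H1 H2 N12]]; rewrite !inE in H1 H2.
case: (eqVneq w1 v) => [E1|N1]; last by exists w1.
by exists w2; rewrite // -E1 eq_sym.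
Qed.

Lemma two_other_nbrs u v : adj u v -> u \notin leaves adj -> deg adj u != 2 ->
  exists w1 w2, [/\ adj u w1, adj u w2, w1 != w2, w1 != v & w2 != v].
Proof.
move=> Huv Hl H2.
have : 2 < #|nbhd adj u|.
  have : 0 < #|nbhd adj u| by apply/card_gt0P; exists v; rewrite inE.
  by move: Hl H2; rewrite inE /deg; case: #|nbhd adj u| => [|[|[|n]]].
case/card_gt2P=> x1 [x2 [x3 [[H1 H2' H3] [N12 N23 N31]]]]; rewrite !inE in H1 H2' H3.
case: (eqVneq x1 v) => [E1|N1]; first by exists x2, x3; rewrite -E1; split; rewrite // eq_sym.
case: (eqVneq x2 v) => [E2|N2]; first by exists x1, x3; rewrite -E2; split; rewrite // eq_sym.
by exists x1, x2.
Qed.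

End Degrees.

Lemma indicator_setU (T : finType) (R : ringType) (A B : {set T}) x :
  (forall y, y \in A -> y \notin B) ->
  ((x \in A :|: B)%:R = (x \in A)%:R + (x \in B)%:R :> R)%R.
Proof.
move=> D; rewrite in_setU; case: (boolP (x \in A)) => HA /=; last by rewrite add0r.
by rewrite (negbTE (D x HA)) addr0.
Qed.

Lemma cord_pair (V : finType) (adj : rel V) x y :
  x \in leaves adj -> y \in leaves adj -> x != y -> cord adj [set x; y].
Proof. by move=> Hx Hy Nxy; rewrite /cord cards2 Nxy subUset !sub1set Hx Hy. Qed.

Lemma set2_cases (V : finType) (y z a b : V) : [set y; z] = [set a; b] ->
  (a = y /\ b = z) \/ (a = z /\ b = y).
Proof.
move/setP=> E.
have Ha := E a; have Hb := E b; have Hy := E y; have Hz := E z.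
rewrite !inE !eqxx ?orbT /= in Ha Hb Hy Hz.
case/orP: Ha => /eqP Ea; case/orP: Hb => /eqP Eb; subst a b.
- by rewrite orbb in Hz; move/esym/eqP: Hz => ->; left.
- by left.
- by right.
- by rewrite orbb in Hy; move/esym/eqP: Hy => ->; left.
Qed.

Section SimplePaths.
Variables (V : finType) (adj : rel V).
Hypotheses (adj_sym : symmetric adj) (adj_irr : irreflexive adj).
Hypothesis unique_paths : forall (u : V) (p q : seq V), path adj u p -> path adj u q ->
  uniq (u :: p) -> uniq (u :: q) -> last u p = last u q -> p = q.

Definition spath (x : V) (p : seq V) (y : V) : bool :=
  [&& path adj x p, uniq (x :: p) & last x p == y].

Lemma spath_unique x p q y : spath x p y -> spath x q y -> p = q.
Proof.
case/and3P=> P1 U1 /eqP L1; case/and3P=> P2 U2 /eqP L2.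
by apply: (unique_paths P1 P2 U1 U2); rewrite L1 L2.
Qed.

Lemma spath_exists x y : connect adj x y -> exists p, spath x p y.
Proof.
case/connectP=> p Hp ->; case: (shortenP Hp) => p' Hp' Hu' _.
by exists p'; rewrite /spath Hp' Hu' eqxx.
Qed.

Lemma spath_size x p y : spath x p y -> size p < #|V|.
Proof.
by case/and3P=> _ Hu _; have := max_card (mem (x :: p)); rewrite (card_uniqP Hu).
Qed.

Lemma spath_edge x y : adj x y -> spath x [:: y] y.
Proof.
move=> H; rewrite /spath /= H inE eqxx !andbT.
by apply: contraTneq H => ->; rewrite adj_irr.
Qed.

Lemma spath_rcons x p l :
  spath x (rcons p l) l = [&& spath x p (last x p), adj (last x p) l & l \notin x :: p].
Proof.
rewrite /spath rcons_path -rcons_cons rcons_uniq last_rcons !eqxx !andbT.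
by case: (path adj x p); case: (uniq (x :: p)); case: (adj (last x p) l); rewrite /= ?andbT ?andbF.
Qed.

Lemma Epath_spath x p y : spath x p y -> Epath adj x y = pedges x p.
Proof.
move=> Hs; apply/setP=> e; rewrite inE; apply/existsP/idP.
  case=> k /existsP [t /and4P [Hp Hu Hl He]].
  have Ht : spath x t y by rewrite /spath Hp Hu Hl.
  by rewrite -(spath_unique Ht Hs).
move=> He; have Hk := spath_size Hs.
exists (Ordinal Hk); apply/existsP; exists (in_tuple p).
by case/and3P: Hs => -> -> -> /=.
Qed.

Lemma spath_prefix x p y w : spath x p y -> w \in x :: p ->
  spath x (take (index w (x :: p)) p) w.
Proof.
case/and3P=> Hp Hu _ Hw.
rewrite /spath take_path //= last_take_index // eqxx andbT.
by have := take_uniq (index w (x :: p)).+1 Hu.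
Qed.

Lemma spath_rev x p y : spath x p y -> spath y (rev (belast x p)) x.
Proof.
case/and3P=> Hp Hu /eqP <-.
rewrite /spath last_rev_belast eqxx andbT rev_path.
have -> : path (fun z : V => adj^~ z) x p = path adj x p.
  by apply: eq_path => a b; rewrite adj_sym.
by rewrite Hp -rev_rcons -lastI rev_uniq.
Qed.

Lemma Epath_sym x y : connect adj x y -> Epath adj x y = Epath adj y x.
Proof.
move=> /spath_exists [p Hp].
rewrite (Epath_spath Hp) (Epath_spath (spath_rev Hp)).
by case/and3P: Hp => _ _ /eqP <-; rewrite pedges_rev.
Qed.

Lemma spath_disj x p y q z : spath x p y -> spath x q z -> head x p != head x q ->
  forall w, w \in p -> w \notin q.
Proof.
move=> Hp Hq Hh w wp; apply/negP=> wq.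
have [wp' wq'] : w \in x :: p /\ w \in x :: q by rewrite !inE wp wq !orbT.
have E := spath_unique (spath_prefix Hp wp') (spath_prefix Hq wq').
case/and3P: Hp => _ /= /andP [xp _] _.
have nxw : x != w by apply: contraNneq xp => ->.
move: E Hh; rewrite /= (negbTE nxw).
case: p wp {xp wp'} => [//|a p] _; case: q wq {wq' Hq} => [//|b q] _ /=.
by case=> -> _; rewrite eqxx.
Qed.

Lemma pedges_disj x p y q z : spath x p y -> spath x q z -> head x p != head x q ->
  forall e, e \in pedges x p -> e \notin pedges x q.
Proof.
move=> Hp Hq Hh e ep; apply/negP=> eq.
have D := spath_disj Hp Hq Hh.
case/and3P: Hp => Pp _ _; case/and3P: Hq => Pq _ _.
have [a [b [Ha Hb Hab E1]]] := pedges_mem Pp ep.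
have [a' [b' [Ha' Hb' _ E2]]] := pedges_mem Pq eq.
have only_x c : c \in e -> c \in x :: p -> c = x.
  move=> ce; rewrite inE => /orP [/eqP -> //|cp].
  have : c \in x :: q by move: ce; rewrite E2 !inE => /orP [] /eqP ->.
  by rewrite inE (negbTE (D c cp)) orbF => /eqP.
have ax : a = x by apply: only_x Ha; rewrite E1 set21.
have bx : b = x by apply: only_x Hb; rewrite E1 set22.
by move: Hab; rewrite ax bx adj_irr.
Qed.

Lemma spath_join x p y q z : spath x p y -> spath x q z -> head x p != head x q ->
  spath y (rev (belast x p) ++ q) z.
Proof.
move=> Hp Hq Hh; have D := spath_disj Hp Hq Hh.
have := spath_rev Hp; case/and3P=> Pr Ur /eqP Lr.
case/and3P: Hp => _ Up /eqP Ly; case/and3P: Hq => Pq Uq /eqP Lz.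
rewrite /spath cat_path Pr Lr Pq last_cat Lr Lz eqxx andbT.
rewrite -cat_cons -Ly -rev_rcons -lastI cat_uniq rev_uniq Up.
move: Uq; rewrite cons_uniq => /andP [xq ->]; rewrite andbT /= andbT.
apply/hasPn=> w wq; rewrite mem_rev inE negb_or (contraL (D w) wq) andbT.
by apply: contraNneq xq => <-.
Qed.

Lemma Epath_join x p y q z : spath x p y -> spath x q z -> head x p != head x q ->
  Epath adj y z = pedges x p :|: pedges x q.
Proof.
move=> Hp Hq Hh; rewrite (Epath_spath (spath_join Hp Hq Hh)) pedges_cat.
have := spath_rev Hp; case/and3P=> _ _ /eqP ->.
by case/and3P: Hp => _ _ /eqP <-; rewrite pedges_rev.
Qed.

Lemma spath_join_neq x p y q z : spath x p y -> spath x q z -> q != [::] ->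
  head x p != head x q -> y != z.
Proof.
move=> Hp Hq q0 Hh; apply/eqP=> Eyz.
have D := spath_disj Hp Hq Hh.
case/and3P: Hp => _ _ /eqP Ly; case/and3P: Hq => _ Uq /eqP Lz.
have zq : z \in q by rewrite -Lz; case: q q0 {D Uq Lz Hh} => //= b q _; exact: mem_last.
have : z \in x :: p by rewrite -Eyz -Ly mem_last.
rewrite inE => /orP [/eqP zx|zp]; last by have := D z zp; rewrite zq.
by move: Uq; rewrite /= -zx zq.
Qed.

Lemma spath_extend x p l : spath x (rcons p l) l -> l \notin leaves adj ->
  exists y, spath x (rcons (rcons p l) y) y.
Proof.
rewrite spath_rcons => /and3P [Hp Hprl lnp] Hl.
have Hlpr : adj l (last x p) by rewrite adj_sym.
have [y Hly ypr] := other_nbr Hlpr Hl.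
case: (boolP (y \in x :: p)) => yp; last first.
  exists y; rewrite spath_rcons last_rcons Hly -rcons_cons mem_rcons inE negb_or yp andbT.
  rewrite spath_rcons Hp Hprl lnp !andbT.
  by apply: contraTneq Hly => ->; rewrite adj_irr.
have Hq := spath_prefix Hp yp; have /and3P [_ _ /eqP Ly] := Hq.
have Hql : spath x (rcons (take (index y (x :: p)) p) l) l.
  rewrite spath_rcons Ly Hq adj_sym Hly.
  by apply: contra lnp; rewrite -[x :: take _ _]/(take _.+1 (x :: p)); exact: mem_take.
have Hpl : spath x (rcons p l) l by rewrite spath_rcons Hp Hprl lnp.
have /rcons_inj [Ep] := spath_unique Hql Hpl.
by move: ypr; rewrite -Ly Ep eqxx.
Qed.

Lemma leaf_branch x w : adj x w ->
  exists l p, [/\ spath x p l, p != [::], head x p = w & l \in leaves adj].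
Proof.
move=> Hxw.
have grow q : spath x q (last x q) -> q != [::] -> head x q = w ->
    exists l p, [/\ spath x p l, p != [::], head x p = w & l \in leaves adj].
  have [n] := ubnP (#|V| - size q); elim: n q => // n IH q.
  case/lastP: q => // p l Hn; rewrite last_rcons => Hpl _ Hh.
  case: (boolP (l \in leaves adj)) => Hl.
    by exists l, (rcons p l); rewrite -size_eq0 size_rcons.
  have [y Hy] := spath_extend Hpl Hl.
  apply: (IH (rcons (rcons p l) y)); rewrite ?last_rcons //.
  - by move: Hn (spath_size Hy); rewrite !size_rcons; lia.
  - by rewrite -size_eq0 size_rcons.
  - by rewrite -Hh; case: p {Hn Hpl Hy Hh}.
by apply: (grow [:: w]) => //; exact: spath_edge.
Qed.

Lemma spath_cons_edge u v q c : adj u v -> spath v q c -> q != [::] -> head v q != u ->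
  spath u (v :: q) c /\ [set u; v] \notin pedges v q.
Proof.
move=> Huv Hq q0 Hqu.
have Hvu : spath v [:: u] u by apply: spath_edge; rewrite adj_sym.
have Hh : head v [:: u] != head v q by rewrite /= eq_sym.
split; last first.
  have := pedges_disj Hvu Hq Hh (e := [set v; u]).
  by rewrite pedges_cons pedges_nil setU0 in_set1 eqxx setUC; apply.
have uq : u \notin q by apply: (spath_disj Hvu Hq Hh); rewrite inE.
case/and3P: Hq => Pq Uq Lq.
rewrite /spath cons_uniq Uq inE negb_or uq /= Huv Pq Lq !andbT.
by apply: contraTneq Huv => ->; rewrite adj_irr.
Qed.

Hypothesis connected : forall a b, connect adj a b.

Lemma Ecord_pair (y z : V) : Ecord adj [set y; z] = Epath adj y z.
Proof.
apply/setP=> e; rewrite inE; apply/existsP/idP.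
  case=> a /existsP [b /andP [/eqP E He]].
  by case: (set2_cases E) He => [[-> ->] //|[-> ->]]; rewrite Epath_sym.
by move=> He; exists y; apply/existsP; exists z; rewrite eqxx He.
Qed.

(* The four-point identity behind the theorem: around an interior edge uv
   there are leaves a, b (behind u) and c, d (behind v) with
   lambda_ac + lambda_bd - lambda_ab - lambda_cd = 2 * (indicator of uv),
   since the paths a-c and b-d cross uv while a-b and c-d do not. *)
Lemma four_leaves (R : realFieldType) u v : adj u v ->
  u \notin leaves adj -> v \notin leaves adj ->
  deg adj u != 2 -> deg adj v != 2 ->
  exists a b c d, [/\ cord adj [set a; c], cord adj [set b; d],
    cord adj [set a; b], cord adj [set c; d] &
    forall e, (lam adj R [set a; c] e + lam adj R [set b; d] e
               - lam adj R [set a; b] e - lam adj R [set c; d] e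
               = 2%:R * (e == [set u; v])%:R)%R].
Proof.
move=> Huv Hu Hv Hu2 Hv2.
have Hvu : adj v u by rewrite adj_sym.
have [w1 [w2 [Hw1 Hw2 N12 N1 N2]]] := two_other_nbrs Huv Hu Hu2.
have [z1 [z2 [Hz1 Hz2 M12 M1 M2]]] := two_other_nbrs Hvu Hv Hv2.
have [a [pa [Spa na Hha La]]] := leaf_branch Hw1.
have [b [pb [Spb nb Hhb Lb]]] := leaf_branch Hw2.
have [c [pc [Spc nc Hhc Lc]]] := leaf_branch Hz1.
have [d [pd [Spd nd Hhd Ld]]] := leaf_branch Hz2.
have [Sc Dc] : spath u (v :: pc) c /\ [set u; v] \notin pedges v pc.
  by apply: spath_cons_edge; rewrite ?Hhc.
have [Sd Dd] : spath u (v :: pd) d /\ [set u; v] \notin pedges v pd.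
  by apply: spath_cons_edge; rewrite ?Hhd.
have h_ac : head u pa != head u (v :: pc) by rewrite Hha.
have h_bd : head u pb != head u (v :: pd) by rewrite Hhb.
have h_ab : head u pa != head u pb by rewrite Hha Hhb.
have h_cd : head v pc != head v pd by rewrite Hhc Hhd.
exists a, b, c, d; split; try apply: cord_pair => //.
- exact: spath_join_neq Spa Sc isT h_ac.
- exact: spath_join_neq Spb Sd isT h_bd.
- exact: spath_join_neq Spa Spb nb h_ab.
- exact: spath_join_neq Spc Spd nd h_cd.
move=> e; rewrite /lam !Ecord_pair.
rewrite (Epath_join Spa Sc h_ac) (Epath_join Spb Sd h_bd).
rewrite (Epath_join Spa Spb h_ab) (Epath_join Spc Spd h_cd).
have := pedges_disj Spa Sc h_ac; have := pedges_disj Spb Sd h_bd.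
have := pedges_disj Spa Spb h_ab; have := pedges_disj Spc Spd h_cd.
move=> D_cd D_ab D_bd D_ac; rewrite !indicator_setU //.
rewrite !pedges_cons !indicator_setU ?in_set1 //; last 2 first.
- by move=> e'; rewrite in_set1 => /eqP ->.
- by move=> e'; rewrite in_set1 => /eqP ->.
ring.
Qed.

End SimplePaths.

Section Span.
Local Open Scope ring_scope.
Variables (V : finType) (R : realFieldType).
Implicit Types (L : {set V} -> {set V} -> R) (C D : {set {set V}}) (w : {set V} -> R).

Definition inspan L C w : Prop :=
  exists s : {set V} -> R, forall e, w e = \sum_(b in C) s b * L b e.

Definition unitv (f e : {set V}) : R := (e == f)%:R.

Lemma sum_pick C (c : {set V}) (F : {set V} -> R) : c \in C ->
  \sum_(b in C) (b == c)%:R * F b = F c.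
Proof.
move=> Hc; rewrite (bigD1 c) //= eqxx mul1r big1 ?addr0 //.
by move=> b /andP [_ /negbTE ->]; rewrite mul0r.
Qed.

Lemma span_mem L C c : c \in C -> inspan L C (L c).
Proof. by move=> Hc; exists (fun b => (b == c)%:R) => e; rewrite sum_pick. Qed.

Lemma span_ext L C w1 w2 : (forall e, w1 e = w2 e) -> inspan L C w1 -> inspan L C w2.
Proof. by move=> E [s H]; exists s => e; rewrite -E H. Qed.

Lemma span_add L C w1 w2 : inspan L C w1 -> inspan L C w2 ->
  inspan L C (fun e => w1 e + w2 e).
Proof.
move=> [s1 H1] [s2 H2]; exists (fun b => s1 b + s2 b) => e.
by rewrite H1 H2 -big_split; apply: eq_bigr => b _; rewrite mulrDl.
Qed.

Lemma span_scale L C k w : inspan L C w -> inspan L C (fun e => k * w e).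
Proof.
move=> [s H]; exists (fun b => k * s b) => e.
by rewrite H mulr_sumr; apply: eq_bigr => b _; rewrite mulrA.
Qed.

Lemma span_sub L C w1 w2 : inspan L C w1 -> inspan L C w2 ->
  inspan L C (fun e => w1 e - w2 e).
Proof.
move=> H1 H2; apply: span_ext (span_add H1 (span_scale (-1) H2)) => e.
by rewrite mulN1r.
Qed.

Lemma span_subset L C D w : C \subset D -> inspan L C w -> inspan L D w.
Proof.
move=> sCD [s H]; exists (fun b => if b \in C then s b else 0) => e.
rewrite H [RHS](big_setID C) /= (setIidPr sCD) [X in _ + X]big1 ?addr0; last first.
  by move=> b /setDP [_ /negbTE ->]; rewrite mul0r.
by apply: eq_bigr => b ->.
Qed.

Lemma span_setU1 L C c w : c \notin C -> inspan L C (L c) ->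
  inspan L (c |: C) w -> inspan L C w.
Proof.
move=> nc Hc [s H].
apply: span_ext (span_add (span_scale (s c) Hc) (ex_intro _ s (fun e => erefl))) => e.
by rewrite H big_setU1.
Qed.

Lemma indep_coef L C (g h : {set V} -> R) : indep L C ->
  (forall e, \sum_(b in C) g b * L b e = \sum_(b in C) h b * L b e) ->
  forall b, b \in C -> g b = h b.
Proof.
move=> HI E b Hb; apply/eqP; rewrite -subr_eq0; apply/eqP.
apply: (HI (fun b => g b - h b)) Hb => e.
under eq_bigr => i _ do rewrite mulrBl.
by rewrite sumrB E subrr.
Qed.

Lemma solve_lincomb C (k x : R) (g K : {set V} -> R) : k != 0 ->
  k * x + \sum_(b in C) g b * K b = 0 -> x = \sum_(b in C) (- g b / k) * K b.
Proof.
move=> k0 /eqP; rewrite addr_eq0 => /eqP E.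
rewrite -[x](mulKf k0) E mulrN -mulNr mulr_sumr.
by apply: eq_bigr => b _; ring.
Qed.

Lemma span_notindep L C c : c \notin C -> inspan L C (L c) -> ~ indep L (c |: C).
Proof.
move=> nc [s Hs] Hind.
have := Hind (fun b => if b == c then 1 else - s b) _ c (setU11 c C).
rewrite eqxx => H; have := oner_neq0 R; rewrite H ?eqxx // => e.
rewrite big_setU1 //= eqxx mul1r.
rewrite (eq_bigr (fun b => - (s b * L b e))); last first.
  by move=> b Hb; rewrite ifN ?mulNr //; apply: contraNneq nc => <-.
by rewrite sumrN (Hs e) subrr.
Qed.

Lemma notindep_span L C c : indep L C -> c \notin C -> ~ indep L (c |: C) ->
  inspan L C (L c).
Proof.
move=> HI nc HN; apply: NNPP => Hns; apply: HN => a Ha.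
have Hc : a c = 0.
  case: (eqVneq (a c) 0) => // Hac; case: Hns; exists (fun b => - a b / a c) => e.
  by apply: solve_lincomb Hac _; have := Ha e; rewrite big_setU1.
have H0 : forall b, b \in C -> a b = 0.
  by apply: HI => e; have := Ha e; rewrite big_setU1 //= Hc mul0r add0r.
by move=> b; rewrite in_setU1 => /orP [/eqP -> //|]; exact: H0.
Qed.

Lemma span_of_basis (adj : rel V) L C c : is_basis adj L C -> cord adj c ->
  inspan L C (L c).
Proof.
move=> [_ HI HM] Hc; case: (boolP (c \in C)) => Hin; first exact: span_mem.
exact: notindep_span HI Hin (HM c Hc Hin).
Qed.

End Span.

Section Contraction.
Local Open Scope ring_scope.
Variables (V : finType) (adj : rel V) (R : realFieldType).
Variables (L LC : {set V} -> {set V} -> R) (f : {set V}).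

(* LC is L with the coordinate f deleted, i.e. followed by the projection
   forgetting f; this is how lambda^{T/f} arises from lambda^T. *)
Hypothesis LC_proj : forall c e, LC c e = if e == f then 0 else L c e.

Lemma sum_proj (C : {set {set V}}) (g : {set V} -> R) e :
  \sum_(b in C) g b * LC b e = if e == f then 0 else \sum_(b in C) g b * L b e.
Proof.
case: (eqVneq e f) => [->|nef].
  by rewrite big1 // => b _; rewrite LC_proj eqxx mulr0.
by apply: eq_bigr => b _; rewrite LC_proj (negbTE nef).
Qed.

Lemma span_proj (C : {set {set V}}) c : inspan L C (L c) -> inspan LC C (LC c).
Proof.
by move=> [s H]; exists s => e; rewrite sum_proj LC_proj; case: (e == f).
Qed.

Section FromContraction.
Variables (xy : {set V}) (B : {set {set V}}) (rho : {set V} -> R).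
Hypotheses (xy_cord : cord adj xy) (B_basis : is_basis adj LC B).
Hypothesis rho_rep : forall e, LC xy e = \sum_(b in B) rho b * LC b e.
Hypothesis rho_lift : \sum_(b in B) rho b * L b f != L xy f.

Let s : R := L xy f - \sum_(b in B) rho b * L b f.

Lemma s_neq0 : s != 0.
Proof. by rewrite subr_eq0 eq_sym. Qed.

Lemma residue_unitv e : L xy e - \sum_(b in B) rho b * L b e = s * unitv R f e.
Proof.
rewrite /unitv; case: (eqVneq e f) => [->|nef]; first by rewrite mulr1.
have := rho_rep e; rewrite LC_proj sum_proj (negbTE nef) => ->.
by rewrite subrr mulr0.
Qed.

(* xy is not in B: otherwise its representation would be trivial and lift. *)
Lemma cord_notin_basis : xy \notin B.
Proof.
apply/negP => HxyB; move/negP: rho_lift; apply.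
have [_ HBi _] := B_basis.
have rho_pick : forall b, b \in B -> rho b = (b == xy)%:R.
  by apply: (indep_coef HBi) => e; rewrite sum_pick // rho_rep.
by rewrite (eq_bigr (fun b => (b == xy)%:R * L b f)) ?sum_pick // => b /rho_pick ->.
Qed.

Lemma lift_span (g : {set V} -> R) :
  inspan L (xy |: B) (fun e => \sum_(b in B) g b * L b e).
Proof. by apply: (span_subset (subsetUr _ _)); exists g. Qed.

(* Solving the residue equation for the unit vector of f. *)
Lemma unitv_span : inspan L (xy |: B) (unitv R f).
Proof.
apply: span_ext (span_scale s^-1 (span_sub (span_mem L (setU11 xy B)) (lift_span rho))) => e.
by rewrite residue_unitv mulKf // s_neq0.
Qed.

Lemma indep_extension : indep L (xy |: B).
Proof.
have [_ HBi _] := B_basis; have nxy := cord_notin_basis.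
move=> a Ha.
have Ha' e : a xy * L xy e + \sum_(b in B) a b * L b e = 0.
  by have := Ha e; rewrite big_setU1.
(* Projecting the relation and substituting rho shows a = - a xy * rho on B. *)
have a_B : forall b, b \in B -> a b = - a xy * rho b.
  apply: (indep_coef HBi) => e.
  under [RHS]eq_bigr => b _ do rewrite -mulrA.
  rewrite -mulr_sumr -rho_rep sum_proj LC_proj.
  case: (e == f); first by rewrite mulr0.
  by apply/eqP; rewrite mulNr -addr_eq0 addrC Ha'.
(* Evaluating the relation at f then gives a xy * s = 0. *)
have a_xy : a xy = 0.
  have : a xy * s = 0.
    rewrite -(Ha' f) /s.
    under [X in _ = _ + X]eq_bigr => b Hb do rewrite (a_B _ Hb) -mulrA.
    by rewrite -mulr_sumr; ring.
  by move/eqP; rewrite mulf_eq0 (negbTE s_neq0) orbF => /eqP.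
by move=> b; rewrite in_setU1 => /orP [/eqP -> //|/a_B ->]; rewrite a_xy oppr0 mul0r.
Qed.

(* xy |: B is maximal: a cord c is spanned by B in LC, hence, up to a
   multiple of the unit vector of f, by B in L. *)
Lemma maximal_extension c : cord adj c -> c \notin xy |: B -> ~ indep L (c |: (xy |: B)).
Proof.
have [_ HBi HBm] := B_basis.
move=> Hc ncS; apply: span_notindep => //.
have nc : c \notin B by apply: contra ncS; rewrite in_setU1 => ->; rewrite orbT.
have [sg Hsg] := notindep_span HBi nc (HBm c Hc nc).
(* L c differs from the lift of its representation sg by t * unitv f. *)
pose t := L c f - \sum_(b in B) sg b * L b f.
apply: span_ext (span_add (lift_span sg) (span_scale t unitv_span)) => e.
rewrite /unitv; case: (eqVneq e f) => [->|nef]; first by rewrite mulr1 /t addrC subrK.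
rewrite mulr0 addr0; have := Hsg e.
by rewrite LC_proj sum_proj (negbTE nef) => ->.
Qed.

Lemma basis_from_contraction : is_basis adj L (xy |: B).
Proof.
have [HBc _ _] := B_basis.
split; [|exact: indep_extension|exact: maximal_extension].
by move=> b; rewrite in_setU1 => /orP [/eqP -> //|/HBc].
Qed.

End FromContraction.

Section ToContraction.
Variables (S : {set {set V}}) (tau : {set V} -> R) (xy : {set V}).
Hypothesis S_basis : is_basis adj L S.
Hypothesis tau_rep : forall e, unitv R f e = \sum_(b in S) tau b * L b e.
Hypotheses (xy_in : xy \in S) (tau_xy : tau xy != 0).

Let B := S :\ xy.
Let rho (b : {set V}) : R := - tau b / tau xy.

Lemma S_split : S = xy |: B.
Proof. by rewrite setD1K. Qed.

Lemma sum_split (g : {set V} -> R) (K : {set V} -> {set V} -> R) e :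
  \sum_(b in S) g b * K b e = g xy * K xy e + \sum_(b in B) g b * K b e.
Proof. by rewrite {1}S_split big_setU1 ?setD11. Qed.

(* Off f, the relation tau expresses L xy through B; this gives the
   representation rho of LC xy on B. *)
Lemma rho_rep_contraction e : LC xy e = \sum_(b in B) rho b * LC b e.
Proof.
rewrite sum_proj LC_proj; case: (eqVneq e f) => // nef.
by apply: solve_lincomb tau_xy _; rewrite -sum_split -tau_rep /unitv (negbTE nef).
Qed.

(* At f, the relation tau has value 1, so rho leaves the residue
   1 / tau xy on f: it does not lift. *)
Lemma rho_not_lift : \sum_(b in B) rho b * L b f != L xy f.
Proof.
have E : tau xy * (L xy f - \sum_(b in B) rho b * L b f) = 1.
  have := tau_rep f; rewrite /unitv eqxx /= mulr1n sum_split => ->.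
  rewrite (eq_bigr (fun b => - (tau xy)^-1 * (tau b * L b f))) => [|b _]; last first.
    by rewrite /rho; ring.
  by rewrite -mulr_sumr; field.
apply/negP => /eqP Eq; move: E; rewrite Eq subrr mulr0 => /eqP.
by rewrite eq_sym oner_eq0.
Qed.

(* B is independent in LC: a relation of LC on B is, in L, a multiple t of
   the unit vector of f, hence a relation on S forcing t = 0. *)
Lemma indep_contraction : indep LC B.
Proof.
have [_ HSi _] := S_basis.
move=> a Ha; pose t := \sum_(b in B) a b * L b f.
(* The relation can only survive in L on the coordinate f. *)
have a_unitv e : \sum_(b in B) a b * L b e = t * unitv R f e.
  rewrite /unitv; case: (eqVneq e f) => [->|nef]; first by rewrite mulr1.
  by have := Ha e; rewrite sum_proj (negbTE nef) mulr0.
pose g b := if b == xy then 0 else a b.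
have g_t : forall b, b \in S -> g b = t * tau b.
  apply: (indep_coef HSi) => e.
  rewrite sum_split /g eqxx mul0r add0r.
  under eq_bigr => b /setD1P [nb _] do rewrite (negbTE nb).
  by rewrite a_unitv tau_rep mulr_sumr; apply: eq_bigr => b _; rewrite mulrA.
have t0 : t = 0.
  have /esym/eqP := g_t xy xy_in; rewrite /g eqxx mulf_eq0 (negbTE tau_xy) orbF.
  by move/eqP.
move=> b HbB; have /setD1P [nb HbS] := HbB.
by have := g_t b HbS; rewrite /g (negbTE nb) t0 mul0r.
Qed.

(* B is maximal in LC: any cord is spanned by S, and LC xy by B. *)
Lemma maximal_contraction c : cord adj c -> c \notin B -> ~ indep LC (c |: B).
Proof.
move=> Hc nc; apply: span_notindep => //.
have := span_proj (span_of_basis S_basis Hc); rewrite S_split.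
apply: span_setU1; first by rewrite setD11.
by exists rho; exact: rho_rep_contraction.
Qed.

Lemma contraction_basis : is_basis adj LC B.
Proof.
have [HSc _ _] := S_basis.
split; [|exact: indep_contraction|exact: maximal_contraction].
by move=> b /setD1P [_ /HSc].
Qed.

End ToContraction.

Theorem bases_via_contraction :
  (forall S, is_basis adj L S -> inspan L S (unitv R f)) ->
  forall S : {set {set V}}, is_basis adj L S <->
    exists (xy : {set V}) (B : {set {set V}}),
      [/\ cord adj xy, is_basis adj LC B,
          (exists rho : {set V} -> R,
             (forall e, LC xy e = \sum_(b in B) rho b * LC b e) /\
             \sum_(b in B) rho b * L b f != L xy f)
        & S = xy |: B].
Proof.
move=> unitv_spanned S; split.
  move=> HS; have [tau Htau] := unitv_spanned S HS.
  have [xy HxyS Htxy] : exists2 xy, xy \in S & tau xy != 0.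
    apply/exists_inP; apply: contraT; rewrite negb_exists_in => /forall_inP H0.
    have := Htau f; rewrite /unitv eqxx /= mulr1n big1 => [/eqP|b /H0].
      by rewrite oner_eq0.
    by rewrite negbK => /eqP ->; rewrite mul0r.
  exists xy, (S :\ xy); split; first by case: HS => /(_ xy HxyS).
  - by apply: (contraction_basis (tau := tau)).
  - exists (fun b => - tau b / tau xy); split.
      by apply: (rho_rep_contraction (S := S) (tau := tau)).
    by apply: (rho_not_lift (S := S) (tau := tau)).
  - by rewrite setD1K.
by case=> xy [B [Hxy HB [rho [Hrho Hlift]] ->]]; exact: basis_from_contraction.
Qed.

End Contraction.

Section XTreeContraction.
Local Open Scope ring_scope.
Variables (R : realFieldType) (V : finType) (adj : rel V).

Lemma lamC_proj f c e : lamC adj R f c e = if e == f then 0 else lam adj R c e.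
Proof. by rewrite /lamC /lam; case: (eqVneq e f) => [->|_]; rewrite ?andbF ?andbT. Qed.

(* In an X-tree the unit vector of an interior edge uv is a combination of
   four cords (four_leaves), hence is spanned by every basis of M(T). *)
Lemma interior_unitv_span f : is_Xtree adj -> interior_edge adj f ->
  forall S, is_basis adj (lam adj R) S -> inspan (lam adj R) S (unitv R f).
Proof.
move=> [[Hsym Hirr] Hconn Huniq Hdeg _] [Hfe Hfd] S HS.
have [u [v /andP [Huv /eqP Ef]]] : exists u v, adj u v && (f == [set u; v]).
  by move: Hfe; rewrite inE => /existsP [u /existsP [v H]]; exists u, v.
have Hu : u \notin leaves adj by rewrite (disjointFr Hfd) // Ef set21.
have Hv : v \notin leaves adj by rewrite (disjointFr Hfd) // Ef set22.
have [a [b [c [d [Cac Cbd Cab Ccd Hid]]]]] :=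
  four_leaves Hsym Hirr Huniq Hconn R Huv Hu Hv (Hdeg u) (Hdeg v).
have span_cord := span_of_basis HS.
have Hcomb := span_sub (span_sub (span_add (span_cord _ Cac) (span_cord _ Cbd))
  (span_cord _ Cab)) (span_cord _ Ccd).
apply: span_ext (span_scale 2^-1 Hcomb) => e.
by rewrite Hid /unitv Ef mulKf // pnatr_eq0.
Qed.

End XTreeContraction.

Theorem mainTheorem2 (R : realFieldType) (V : finType) (adj : rel V)
    (f : {set V}) :
  is_Xtree adj -> interior_edge adj f ->
  forall S : {set {set V}},
    is_basis adj (@lam V adj R) S <->
    exists (xy : {set V}) (B : {set {set V}}),
      [/\ cord adj xy,
          is_basis adj (@lamC V adj R f) B,
          (exists rho : {set V} -> R,
              (forall e, lamC adj R f xy e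
                         = (\sum_(b in B) rho b * lamC adj R f b e)%R) /\
              (\sum_(b in B) rho b * delta adj R f b)%R != delta adj R f xy)
        & S = xy |: B].
Proof.
move=> HT Hf.
exact: (bases_via_contraction (lamC_proj R adj f) (interior_unitv_span HT Hf)).
Qed.
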